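(* Let $A$ and $B$ be rings, $f: A\to B$ an injective ring homomorphism and $J$ a proper ideal of $B$. Suppose that either (i) $f(A)\cap J=\{0\}$, or (ii) $J\subseteq\mathrm{nil}(B)$. Then $A\bowtie^{f}J$ is a nil-Armendariz ring if and only if $f(A)+J$ is a nil-Armendariz ring.
   Context: All rings are associative with identity (not necessarily commutative), ring homomorphisms are unital, and ideals are two-sided. $\mathrm{nil}(R)$ denotes the set of nilpotent elements of a ring $R$, and $\mathrm{nil}(R)[x]$ the set of polynomials all of whose coefficients lie in $\mathrm{nil}(R)$. For a ring homomorphism $f:A\to B$ and an ideal $J$ of $B$, the amalgamation is the subring $A\bowtie^{f}J=\{(a,f(a)+j)\mid a\in A,\ j\in J\}$ of $A\times B$; $f(A)+J=\{f(a)+j: a\in A, j\in J\}$ is a subring of $B$. A ring $R$ is nil-Armendariz if whenever $p(x)=\sum_{i=0}^n a_ix^i$ and $q(x)=\sum_{j=0}^m b_jx^j$ in $R[x]$ satisfy $p(x)q(x)\in\mathrm{nil}(R)[x]$, then $a_ib_j\in\mathrm{nil}(R)$ for all $i,j$. *)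

From HB Require Import structures.
From mathcomp Require Import all_boot all_order all_algebra.
Set Implicit Arguments. Unset Strict Implicit. Unset Printing Implicit Defensive.
Import GRing.Theory.
Local Open Scope ring_scope.

Definition nilpotent_el {R : nzRingType} (x : R) : Prop := exists n : nat, x ^+ n = 0.

Definition is_twosided_ideal {B : nzRingType} (J : B -> Prop) : Prop :=
  [/\ J 0,
      forall x y, J x -> J y -> J (x + y),
      forall x, J x -> J (- x),
      forall r x, J x -> J (r * x)
    & forall r x, J x -> J (x * r)].

Definition is_proper_ideal {B : nzRingType} (J : B -> Prop) : Prop :=
  is_twosided_ideal J /\ ~ J 1.

Definition is_subring {R : nzRingType} (S : R -> Prop) : Prop :=
  [/\ S 1,
      forall x y, S x -> S y -> S (x - y)
    & forall x y, S x -> S y -> S (x * y)].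

(* Polynomials over S are polynomials over R whose coefficients lie in
   S; multiplication and nilpotency in S are those of R. *)
Definition nil_Armendariz_sub {R : nzRingType} (S : R -> Prop) : Prop :=
  forall p q : {poly R},
    (forall i, S p`_i) -> (forall i, S q`_i) ->
    (forall k, nilpotent_el (p * q)`_k) ->
    forall i j, nilpotent_el (p`_i * q`_j).

Definition nil_Armendariz (R : nzRingType) : Prop :=
  nil_Armendariz_sub (fun _ : R => True).

Definition amalgamation {A B : nzRingType} (f : {rmorphism A -> B})
  (J : B -> Prop) : (A * B)%type -> Prop :=
  fun x => exists (a : A) (j : B), J j /\ x = (a, f a + j).

Definition fA_plus_J {A B : nzRingType} (f : {rmorphism A -> B})
  (J : B -> Prop) : B -> Prop :=
  fun y => exists (a : A) (j : B), J j /\ y = f a + j.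

From HB Require Import structures.
From mathcomp Require Import all_boot all_order all_algebra.

Set Implicit Arguments. Unset Strict Implicit. Unset Printing Implicit Defensive.
Import GRing.Theory.
Local Open Scope ring_scope.

(* The second projection A * B -> B restricts to a ring morphism from the
   amalgamation onto f(A) + J, and polynomials over f(A) + J lift to it
   coefficientwise.  Either hypothesis on J makes this projection reflect
   nilpotency: if (a, f a + j) ^+ n has second component 0, then f (a ^+ n)
   lies in J, so it is nilpotent, and so is a by injectivity of f.  A ring
   morphism that maps a subring onto a set and reflects nilpotency there
   transports the nil-Armendariz condition in both directions. *)

Lemma fstX (R S : nzRingType) (x : R * S) (n : nat) : (x ^+ n).1 = x.1 ^+ n.
Proof. by rewrite -[LHS]/(fst _) rmorphXn. Qed.

Lemma sndX (R S : nzRingType) (x : R * S) (n : nat) : (x ^+ n).2 = x.2 ^+ n.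
Proof. by rewrite -[LHS]/(snd _) rmorphXn. Qed.

Lemma nilpotent_rmorph (R S : nzRingType) (g : {rmorphism R -> S}) (x : R) :
  nilpotent_el x -> nilpotent_el (g x).
Proof. by case=> n xn0; exists n; rewrite -rmorphXn xn0 rmorph0. Qed.

Lemma nilpotent_inj_rmorph (R S : nzRingType) (g : {rmorphism R -> S}) (x : R) :
  injective g -> nilpotent_el (g x) -> nilpotent_el x.
Proof.
by move=> g_inj [n gxn0]; exists n; apply: g_inj; rewrite rmorphXn gxn0 rmorph0.
Qed.

Lemma nilpotent_exp (R : nzRingType) (x : R) (n : nat) :
  nilpotent_el (x ^+ n) -> nilpotent_el x.
Proof. by case=> m xnm0; exists (n * m)%N; rewrite exprM. Qed.

Lemma nilpotent_pair (R S : nzRingType) (x : R * S) :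
  nilpotent_el x.1 -> nilpotent_el x.2 -> nilpotent_el x.
Proof.
move=> [m x1m0] [n x2n0]; exists (m + n)%N.
apply/eqP; rewrite -[_ == 0]/((_, _) == (0, 0)) xpair_eqE fstX sndX.
by rewrite exprD x1m0 addnC exprD x2n0 !mul0r !eqxx.
Qed.

Section Subring.
Variables (R : nzRingType) (S : R -> Prop).
Hypothesis S_subring : is_subring S.

Lemma subring0 : S 0.
Proof. by case: S_subring => S1 SB _; rewrite -(subrr 1); apply: SB. Qed.

Lemma subringN x : S x -> S (- x).
Proof. by case: S_subring => _ SB _ Sx; rewrite -sub0r; apply: SB => //; apply: subring0. Qed.

Lemma subringD x y : S x -> S y -> S (x + y).
Proof.
by case: S_subring => _ SB _ Sx Sy; rewrite -[y]opprK; apply: SB => //; apply: subringN.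
Qed.

Lemma subringM x y : S x -> S y -> S (x * y).
Proof. by case: S_subring => _ _; apply. Qed.

Lemma subringX x n : S x -> S (x ^+ n).
Proof.
case: S_subring => S1 _ SM Sx.
by elim: n => [|n IHn]; [rewrite expr0 | rewrite exprS; apply: SM].
Qed.

Lemma subring_coefM (p q : {poly R}) :
  (forall i, S p`_i) -> (forall i, S q`_i) -> forall k, S (p * q)`_k.
Proof.
move=> Sp Sq k; rewrite coefM.
by apply: big_ind => [|x y|i _]; [apply: subring0 | apply: subringD | apply: subringM].
Qed.

End Subring.

Section NilArmendarizTransfer.
Variables (R S : nzRingType) (g : {rmorphism R -> S}) (P : R -> Prop) (Q : S -> Prop).
Hypothesis P_subring : is_subring P.
Hypothesis g_maps : forall x, P x -> Q (g x).
Hypothesis g_onto : forall y, Q y -> exists2 x, P x & g x = y.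
Hypothesis g_reflects_nil : forall x, P x -> nilpotent_el (g x) -> nilpotent_el x.

Lemma poly_lift (p : {poly S}) :
  (forall i, Q p`_i) -> exists2 p' : {poly R}, (forall i, P p'`_i) & map_poly g p' = p.
Proof.
elim/poly_ind: p => [_|p c IHp Qpc].
  by exists 0 => [i|]; rewrite ?coef0 ?rmorph0 //; apply: subring0.
have [p' Pp' <-] : exists2 p' : {poly R}, (forall i, P p'`_i) & map_poly g p' = p.
  by apply: IHp => i; have := Qpc i.+1; rewrite -cons_poly_def coef_cons.
have [c' Pc' <-] : exists2 c', P c' & g c' = c.
  by apply: g_onto; have := Qpc 0%N; rewrite -cons_poly_def coef_cons.
exists (p' * 'X + c'%:P) => [i|].
  by rewrite -cons_poly_def coef_cons; case: eqP.
by rewrite rmorphD /= rmorphM /= map_polyX map_polyC.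
Qed.

Lemma nil_Armendariz_sub_transfer : nil_Armendariz_sub P <-> nil_Armendariz_sub Q.
Proof.
have coef_mapM (p q : {poly R}) k :
    (map_poly g p * map_poly g q)`_k = g (p * q)`_k by rewrite -rmorphM coef_map.
split=> [nilP p q Qp Qq | nilQ p q Pp Pq nil_pq i j].
- have [p' Pp' <-] := poly_lift Qp; have [q' Pq' <-] := poly_lift Qq => nil_pq i j.
  rewrite !coef_map -rmorphM; apply: nilpotent_rmorph; apply: nilP => // k.
  apply: g_reflects_nil; first exact: subring_coefM.
  by rewrite -coef_mapM; apply: nil_pq.
- apply: g_reflects_nil; first exact: subringM.
  have Qmap (r : {poly R}) : (forall i, P r`_i) -> forall i, Q (map_poly g r)`_i.
    by move=> Pr k; rewrite coef_map; apply: g_maps.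
  rewrite rmorphM -!(coef_map g); apply: nilQ => [||k]; try exact: Qmap.
  by rewrite coef_mapM; apply: nilpotent_rmorph.
Qed.

End NilArmendarizTransfer.

Section Amalgamation.
Variables (A B : nzRingType) (f : {rmorphism A -> B}) (J : B -> Prop).
Hypothesis J_ideal : is_twosided_ideal J.

Lemma amalgamationP (x : A * B) : amalgamation f J x <-> J (x.2 - f x.1).
Proof.
split=> [[a [j [Jj ->]]] | Jx]; first by rewrite /= addrC addKr.
by exists x.1, (x.2 - f x.1); split=> //; rewrite addrC subrK; case: x {Jx}.
Qed.

Lemma amalgamation_subring : is_subring (amalgamation f J).
Proof.
case: J_ideal => J0 JD JN JL JR.
split=> [|x y /amalgamationP Jx /amalgamationP Jy|x y /amalgamationP Jx /amalgamationP Jy];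
  apply/amalgamationP => /=.
- by rewrite rmorph1 subrr.
- by rewrite rmorphB opprD addrACA -opprD; apply: JD => //; apply: JN.
- rewrite rmorphM.
  have -> : x.2 * y.2 - f x.1 * f y.1 = (x.2 - f x.1) * y.2 + f x.1 * (y.2 - f y.1).
    by rewrite mulrBl mulrBr addrA subrK.
  by apply: JD; [apply: JR | apply: JL].
Qed.

Lemma amalgamation_snd (x : A * B) : amalgamation f J x -> fA_plus_J f J x.2.
Proof. by case=> a [j [Jj ->]]; exists a, j. Qed.

Lemma fA_plus_J_lift (y : B) :
  fA_plus_J f J y -> exists2 x, amalgamation f J x & x.2 = y.
Proof. by case=> a [j [Jj ->]]; exists (a, f a + j) => //; exists a, j. Qed.

Hypothesis f_inj : injective f.
Hypothesis J_nil_on_fA :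
  (forall a : A, J (f a) -> f a = 0) \/ (forall b : B, J b -> nilpotent_el b).

Lemma amalgamation_reflects_nil (x : A * B) :
  amalgamation f J x -> nilpotent_el x.2 -> nilpotent_el x.
Proof.
move=> amal_x [n x2n0]; apply: nilpotent_pair; last by exists n.
have /amalgamationP := subringX amalgamation_subring n amal_x.
rewrite fstX sndX x2n0 sub0r => JNfx1n.
have Jfx1n : J (f (x.1 ^+ n)).
  by case: J_ideal => _ _ JN _ _; rewrite -[f _]opprK; apply: JN.
apply: (nilpotent_exp (n := n)); apply: (nilpotent_inj_rmorph f_inj).
case: J_nil_on_fA => [fA_J0 | J_nil]; last exact: J_nil.
by rewrite fA_J0 //; exists 1%N; rewrite expr1.
Qed.

End Amalgamation.

Theorem theorem3p1 (A B : nzRingType) (f : {rmorphism A -> B}) (J : B -> Prop) :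
  injective f ->
  is_proper_ideal J ->
  ((forall a : A, J (f a) -> f a = 0) \/ (forall b : B, J b -> nilpotent_el b)) ->
  (nil_Armendariz_sub (amalgamation f J) <-> nil_Armendariz_sub (fA_plus_J f J)).
Proof.
move=> f_inj [J_ideal _] J_nil_on_fA.
apply: (nil_Armendariz_sub_transfer (g := snd)).
- exact: amalgamation_subring.
- exact: amalgamation_snd.
- exact: fA_plus_J_lift.
- exact: amalgamation_reflects_nil.
Qed.
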